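(* Let $G\subset\mathbb R^r$ be a lattice of rank $r$ acting on $C(\mathbb R^r)$ by $f^g(x)=f(x+g)$, and let $A$ be a $G$-invariant vector subspace of $C(\mathbb R^r)$. If $A^G=A\cap C^G$ is finite dimensional, then $P_n^G(A)=A\cap P_n^G$ is finite dimensional for every $n\in\mathbb Z_+$.
   Context: $C(\mathbb R^r)$ is the algebra of continuous (real or complex) functions on $\mathbb R^r$; $x_1,\dots,x_r$ are the standard coordinates. $C^G$ is the set of continuous $G$-periodic functions ($f(x+g)=f(x)$ for all $g\in G$). $P_n^G$ is the space of polynomials in $x_1,\dots,x_r$ of degree at most $n$ with coefficients in $C^G$. $A$ is $G$-invariant if $f\in A$ implies $f(\cdot+g)\in A$ for all $g\in G$. *)

From HB Require Import structures.
From mathcomp Require Import all_boot all_order all_algebra.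
From mathcomp Require Import all_classical all_reals all_analysis.
Set Implicit Arguments. Unset Strict Implicit. Unset Printing Implicit Defensive.
Import Order.TTheory GRing.Theory Num.Theory.
Import numFieldNormedType.Exports.
Local Open Scope ring_scope.
Local Open Scope classical_set_scope.

(* Functions R^r -> V, with V a real normed space (V = R for real-valued,
   V = R^2 ~ C for complex-valued functions). *)

Definition lattice_of (R : realType) (r : nat) (B : 'M[R]_r) : set 'rV[R]_r :=
  [set (map_mx (fun z : int => z%:~R) z) *m B | z in [set: 'rV[int]_r]].

Definition is_full_lattice (R : realType) (r : nat) (G : set 'rV[R]_r) : Prop :=
  exists B : 'M[R]_r, B \in unitmx /\ G = lattice_of B.

Definition translate (R : realType) (r : nat) (V : Type)
  (f : 'rV[R]_r -> V) (g : 'rV[R]_r) : 'rV[R]_r -> V := fun x => f (x + g).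

Definition is_subspace_C (R : realType) (r : nat) (V : normedModType R)
  (A : set ('rV[R]_r -> V)) : Prop :=
  [/\ (forall f, A f -> continuous f),
      A (fun _ => 0),
      (forall f g, A f -> A g -> A (fun x => f x + g x)) &
      (forall (a : R) f, A f -> A (fun x => a *: f x))].

Definition G_invariant (R : realType) (r : nat) (V : Type)
  (G : set 'rV[R]_r) (A : set ('rV[R]_r -> V)) : Prop :=
  forall f g, A f -> G g -> A (translate f g).

Definition CG (R : realType) (r : nat) (V : normedModType R)
  (G : set 'rV[R]_r) : set ('rV[R]_r -> V) :=
  [set f | continuous f /\ forall g x, G g -> f (x + g) = f x].

Definition monomial (R : realType) (r n : nat) (alpha : {ffun 'I_r -> 'I_n.+1})
  (x : 'rV[R]_r) : R := \prod_(i < r) (x ord0 i) ^+ (alpha i : nat).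

Definition PnG (R : realType) (r : nat) (V : normedModType R)
  (G : set 'rV[R]_r) (n : nat) : set ('rV[R]_r -> V) :=
  [set f | exists c : {ffun 'I_r -> 'I_n.+1} -> ('rV[R]_r -> V),
     (forall alpha, CG G (c alpha)) /\
     forall x, f x = \sum_(alpha : {ffun 'I_r -> 'I_n.+1} | (\sum_(i < r) (alpha i : nat) <= n)%N)
                       monomial alpha x *: c alpha x].

Definition finite_dim (R : realType) (r : nat) (V : normedModType R)
  (S : set ('rV[R]_r -> V)) : Prop :=
  exists (m : nat) (b : 'I_m -> ('rV[R]_r -> V)),
    forall f, S f -> exists c : 'I_m -> R, forall x, f x = \sum_(i < m) c i *: b i x.

From HB Require Import structures.
From mathcomp Require Import all_boot all_order all_algebra.
From mathcomp Require Import all_classical all_reals all_analysis.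
Import Order.TTheory GRing.Theory Num.Theory.
Import numFieldNormedType.Exports.
Local Open Scope ring_scope.
Local Open Scope classical_set_scope.
Set Implicit Arguments. Unset Strict Implicit. Unset Printing Implicit Defensive.

(* For g in G let fdiff g f := f(. + g) - f.  On P_(n+1)^G the operator fdiff g
   lowers the degree by one (it kills C^G and sends x_i c to
   x_i (fdiff g c) + g_i c(. + g)), and it preserves the G-invariant space A.
   Taking for g the rows of a basis of G, the common kernel of these operators
   on A `&` P_(n+1)^G is A `&` C^G, and their images lie in A `&` P_n^G, finite
   dimensional by induction on n; rank-nullity concludes. *)

Lemma exists_spanning_rows (F : fieldType) (N : nat) (C : set 'rV[F]_N) :
  exists k (M : 'M[F]_(k, N)), (forall i, C (row i M)) /\
    forall c, C c -> exists D : 'rV[F]_k, c = D *m M.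
Proof.
pose rank_in_C (n : nat) :=
  `[< exists k (M : 'M[F]_(k, N)), (forall i, C (row i M)) /\ \rank M = n >].
have rank0 : exists n, rank_in_C n.
  by exists 0%N; apply/asboolP; exists 0%N, 0; split; [case | rewrite mxrank0].
have rank_le n : rank_in_C n -> (n <= N)%N.
  by move=> /asboolP [k [M [_ <-]]]; exact: rank_leq_col.
have [n /asboolP [k [M [CM <-]]] rank_max] := ex_maxnP rank0 rank_le.
exists k, M; split=> // c Cc.
have sub_Mc : (M <= col_mx M c)%MS by rewrite -addsmxE addsmxSl.
have : (col_mx M c <= M)%MS.
  rewrite -(mxrank_leqif_sup sub_Mc).2 eqn_leq mxrankS //=.
  apply: rank_max; apply/asboolP; exists (k + 1)%N, (col_mx M c); split=> // i.
  by case: (split_ordP i) => j ->; rewrite ?rowKu ?rowKd ?ord1 ?row_id.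
by rewrite col_mx_sub => /andP [_ /submxP [D ->]]; exists D.
Qed.

Section FunctionSubspaces.
Variables (R : realType) (r : nat) (V : normedModType R).
Implicit Types (S : set ('rV[R]_r -> V)) (f h : 'rV[R]_r -> V) (g : 'rV[R]_r).

Definition is_subspace S :=
  [/\ S 0, forall f h, S f -> S h -> S (f + h) & forall (a : R) f, S f -> S (a *: f)].

Lemma subspaceI S1 S2 : is_subspace S1 -> is_subspace S2 -> is_subspace (S1 `&` S2).
Proof.
move=> [S0 SD SZ] [T0 TD TZ]; split=> //.
- by move=> f h [Sf Tf] [Sh Th]; split; [exact: SD | exact: TD].
- by move=> a f [Sf Tf]; split; [exact: SZ | exact: TZ].
Qed.

Lemma subspaceB S f h : is_subspace S -> S f -> S h -> S (f - h).
Proof. by move=> [_ SD SZ] Sf Sh; rewrite -scaleN1r; apply/SD/SZ. Qed.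

Lemma subspace_sum S (I : Type) (s : seq I) (P : pred I) (F : I -> 'rV[R]_r -> V) :
  is_subspace S -> (forall i, P i -> S (F i)) -> S (\sum_(i <- s | P i) F i).
Proof. by move=> [S0 SD _] SF; apply: big_ind. Qed.

Definition in_span m (b : 'I_m -> 'rV[R]_r -> V) f :=
  exists c : 'I_m -> R, forall x, f x = \sum_i c i *: b i x.

Lemma finite_dimS S1 S2 : S1 `<=` S2 -> finite_dim S2 -> finite_dim S1.
Proof. by move=> sub [m [b Sb]]; exists m, b => f /sub /Sb. Qed.

Lemma finite_dim_span m (b : 'I_m -> 'rV[R]_r -> V) : finite_dim (in_span b).
Proof. by exists m, b. Qed.

Lemma finite_dimD S1 S2 :
  finite_dim S1 -> finite_dim S2 -> finite_dim [set f + h | f in S1 & h in S2].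
Proof.
move=> [m [e S1e]] [k [d S2d]].
pose join T (u : 'I_m -> T) (v : 'I_k -> T) (t : 'I_(m + k)) :=
  match fintype.split t with inl i => u i | inr l => v l end.
exists (m + k)%N, (join _ e d) => _ [f /S1e [ce fE] [h /S2d [cd hE] <-]].
exists (join _ ce cd) => x; rewrite -[LHS]/(f x + h x) big_split_ord fE hE.
by congr (_ + _); apply: eq_bigr => i _;
  rewrite /join ?(unsplitK (inl _)) ?(unsplitK (inr _)).
Qed.

Definition fdiff g f := translate f g - f.

Fact fdiff_is_linear g : linear (fdiff g).
Proof.
move=> a f h; apply/funext => x.
by rewrite /fdiff /translate /= scalerBr addrACA opprD.
Qed.

HB.instance Definition _ g :=
  GRing.isLinear.Build R _ _ _ (fdiff g) (fdiff_is_linear g).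

Lemma fdiff0_periodic g f : fdiff g f = 0 -> periodic f g.
Proof. by move=> fg0 x; apply/subr0_eq; exact: (congr1 (fun k => k x) fg0). Qed.

Lemma finite_dim_fdiff S g m (b : 'I_m -> 'rV[R]_r -> V) :
  is_subspace S -> (forall f, S f -> in_span b (fdiff g f)) ->
  finite_dim (S `&` [set f | periodic f g]) -> finite_dim S.
Proof.
(* If the coefficient vectors of [fdiff g (fs l)] span those of all [fdiff g f],
   then each [f] in [S] is a combination of the [fs l] plus a g-periodic element. *)
move=> Ssub Sb Sper.
pose C := [set c : 'rV[R]_m | exists f, S f /\
  forall x, fdiff g f x = \sum_i c 0 i *: b i x].
have [k [M [CM spanC]]] := exists_spanning_rows C.
have [fs /all_and2 [Sfs fsM]] := choice CM.
apply: finite_dimS (finite_dimD Sper (finite_dim_span fs)) => f Sf.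
have [c fc] := Sb f Sf.
have [D cD] : exists D : 'rV_k, \row_i c i = D *m M.
  by apply: spanC; exists f; split=> // x; rewrite fc; under [RHS]eq_bigr do rewrite mxE.
have S_comb : S (\sum_l D 0 l *: fs l).
  by apply: subspace_sum => // l _; case: Ssub => _ _; apply.
exists (f - \sum_l D 0 l *: fs l); last exists (\sum_l D 0 l *: fs l).
- split; first exact: subspaceB.
  apply: fdiff0_periodic; rewrite linearB linear_sum /=.
  apply/eqP; rewrite subr_eq0; apply/eqP.
  apply/funext => x; rewrite fct_sumE fc.
  transitivity (\sum_i \sum_l (D 0 l * M l i) *: b i x).
    apply: eq_bigr => i _; rewrite -scaler_suml.
    by have := congr1 (fun v : 'rV_m => v 0 i) cD; rewrite /= !mxE => ->.
  rewrite exchange_big; apply: eq_bigr => l _.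
  rewrite linearZ -[RHS]/(D 0 l *: fdiff g (fs l) x) fsM scaler_sumr.
  by apply: eq_bigr => i _; rewrite mxE scalerA.
- by exists (D 0) => x; rewrite fct_sumE.
- by rewrite subrK.
Qed.

Lemma periodic_subspace g : is_subspace [set f | periodic f g].
Proof.
by split=> [x | f h fg hg x | a f fg x] //; rewrite !fctE /= ?fg ?hg.
Qed.

Lemma finite_dim_fdiff_seq S (s : seq 'rV[R]_r) m (b : 'I_m -> 'rV[R]_r -> V) :
  is_subspace S -> (forall g f, g \in s -> S f -> in_span b (fdiff g f)) ->
  finite_dim [set f | S f /\ forall g, g \in s -> periodic f g] -> finite_dim S.
Proof.
elim: s S => [|g s IH] S Ssub Sb Sper.
  by apply: finite_dimS Sper => f Sf; split.
apply: (finite_dim_fdiff Ssub (Sb g^~ (mem_head g s))).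
apply: IH.
- exact: subspaceI Ssub (periodic_subspace g).
- by move=> g' f g's [Sf _]; apply: Sb; rewrite // inE g's orbT.
- apply: finite_dimS Sper => f [[Sf fg] fs]; split=> // g'.
  by rewrite inE => /predU1P [-> | /fs].
Qed.

End FunctionSubspaces.

Section Periods.
Variables (U W : zmodType) (f : U -> W).

Lemma periodic0 : periodic f 0.
Proof. by move=> x; rewrite addr0. Qed.

Lemma periodicD g h : periodic f g -> periodic f h -> periodic f (g + h).
Proof. by move=> fg fh x; rewrite addrA fh fg. Qed.

Lemma periodicMz g (z : int) : periodic f g -> periodic f (g *~ z).
Proof.
move=> fg; case: z => k x; first exact: periodicn.
by rewrite NegzE mulrNz -(periodicn fg k.+1) subrK.
Qed.

End Periods.

Lemma lattice_of_row (R : realType) (r : nat) (B : 'M[R]_r) (j : 'I_r) :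
  lattice_of B (row j B).
Proof.
exists (delta_mx 0 j) => //; rewrite rowE; congr (_ *m _).
by apply/matrixP => a b; rewrite !mxE; case: (_ && _).
Qed.

Lemma periodic_lattice_of (R : realType) (r : nat) (W : zmodType) (B : 'M[R]_r)
  (f : 'rV[R]_r -> W) :
  (forall j, periodic f (row j B)) -> forall g, lattice_of B g -> periodic f g.
Proof.
move=> fB _ [z _ <-]; rewrite mulmx_sum_row.
apply: big_ind => [|g h|j _]; [exact: periodic0 | exact: periodicD |].
by rewrite mxE scaler_int; apply: periodicMz.
Qed.

Section QuasiPolynomials.
Variables (R : realType) (r : nat) (V : normedModType R) (G : set 'rV[R]_r).
Implicit Types (f h : 'rV[R]_r -> V) (g t : 'rV[R]_r).

Lemma CG_subspace : is_subspace (@CG R r V G).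
Proof.
split=> [|f h [fc fG] [hc hG] | a f [fc fG]].
- by split=> [x | //]; exact: cst_continuous.
- split=> [x | g x Gg]; first by apply: continuousD; [exact: fc | exact: hc].
  by rewrite !fctE /= fG ?hG.
- split=> [x | g x Gg]; first by apply: continuousZ; [exact: cst_continuous | exact: fc].
  by rewrite !fctE /= fG.
Qed.

Lemma CG_translate f t : CG G f -> CG G (translate f t).
Proof.
move=> [fc fG]; split=> [x | g x Gg]; last by rewrite /translate addrAC (fG _ _ Gg).
apply: continuous_comp; last exact: fc.
exact: (cvgD cvg_id (cvg_cst t)).
Qed.

(* P_n^G presented by generators (only [PnG G n `<=` qpoly n] is needed): in
   this form translations and finite differences can be handled constructor
   by constructor. *)
Inductive qpoly : nat -> set ('rV[R]_r -> V) :=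
| qpoly_CG n f : CG G f -> qpoly n f
| qpolyD n f h : qpoly n f -> qpoly n h -> qpoly n (f + h)
| qpolyZ n (a : R) f : qpoly n f -> qpoly n (a *: f)
| qpoly_coord n (i : 'I_r) f : qpoly n f -> qpoly n.+1 (fun x => x ord0 i *: f x).

Lemma qpoly_subspace n : is_subspace (qpoly n).
Proof. by split; [apply: qpoly_CG; case: CG_subspace | exact: qpolyD | exact: qpolyZ]. Qed.

Lemma qpolyS n f : qpoly n f -> qpoly n.+1 f.
Proof.
elim=> {n f} [n f fG | n f h _ qf _ qh | n a f _ qf | n i f _ qf].
- exact: qpoly_CG.
- exact: qpolyD.
- exact: qpolyZ.
- exact: qpoly_coord.
Qed.

Lemma qpoly_leq m n f : (m <= n)%N -> qpoly m f -> qpoly n f.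
Proof. by move=> /subnK <-; elim: (n - m)%N => //= k IH /IH /qpolyS. Qed.

Lemma qpoly0_CG f : qpoly 0 f -> CG G f.
Proof.
have [_ CGD CGZ] := CG_subspace.
move E: 0%N => n q; elim: q E => {n f} [n f fG | n f h _ qf _ qh | n a f _ qf | //] E.
- exact: fG.
- exact: CGD (qf E) (qh E).
- exact: CGZ (qf E).
Qed.

Lemma qpoly_translate n f t : qpoly n f -> qpoly n (translate f t).
Proof.
elim=> {n f} [n f fG | n f k _ qf _ qk | n a f _ qf | n i f _ qf].
- by apply: qpoly_CG; exact: CG_translate.
- exact: qpolyD.
- exact: qpolyZ.
- have -> : translate (fun x : 'rV[R]_r => x ord0 i *: f x) t =
           (fun x : 'rV[R]_r => x ord0 i *: translate f t x) + t ord0 i *: translate f t.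
    by apply/funext => x; rewrite /translate !fctE mxE scalerDl.
  by apply: qpolyD; [exact: qpoly_coord | exact/qpolyS/qpolyZ].
Qed.

Lemma fdiff_CG f g : G g -> CG G f -> fdiff g f = 0.
Proof.
by move=> Gg [_ fG]; apply/funext => x; rewrite /fdiff /translate !fctE /= fG // subrr.
Qed.

Lemma qpoly_fdiff n f g : G g -> qpoly n f -> qpoly n.-1 (fdiff g f).
Proof.
move=> Gg; elim=> {n f} [n f fG | n f h _ qf _ qh | n a f _ qf | n i f fn qf].
- by rewrite fdiff_CG //; case: (qpoly_subspace n.-1).
- by rewrite linearD; exact: qpolyD.
- by rewrite linearZ; exact: qpolyZ.
- have -> : fdiff g (fun x : 'rV[R]_r => x ord0 i *: f x) =
           (fun x : 'rV[R]_r => x ord0 i *: fdiff g f x) + g ord0 i *: translate f g.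
    by apply/funext => x; rewrite /fdiff /translate !fctE /= mxE scalerDl scalerBr addrAC.
  apply: qpolyD; last exact/qpolyZ/qpoly_translate.
  case: n fn qf => [fn _ | n _ qf]; last exact: qpoly_coord.
  rewrite fdiff_CG //; last exact: qpoly0_CG.
  under eq_fun do rewrite scaler0.
  by have [] := qpoly_subspace 0.
Qed.

Lemma qpoly_coord_exp n f (i : 'I_r) k :
  qpoly n f -> qpoly (k + n) (fun x => x ord0 i ^+ k *: f x).
Proof.
move=> qf; elim: k => [|k IH]; first by under eq_fun do rewrite expr0 scale1r.
by under eq_fun do rewrite exprS -scalerA; exact: qpoly_coord.
Qed.

Lemma qpoly_monomial_seq (s : seq 'I_r) (e : 'I_r -> nat) f : CG G f ->
  qpoly (\sum_(i <- s) e i) (fun x => (\prod_(i <- s) x ord0 i ^+ e i) *: f x).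
Proof.
move=> fG; elim: s => [|i s IH].
  by rewrite big_nil; under eq_fun do rewrite big_nil scale1r; exact: qpoly_CG.
rewrite big_cons; under [X in qpoly _ X]eq_fun => x do rewrite big_cons -scalerA.
exact: qpoly_coord_exp.
Qed.

Lemma PnG_sub_qpoly n : PnG G n `<=` qpoly n.
Proof.
move=> f [c [cG fE]].
have -> : f = \sum_(alpha : {ffun 'I_r -> 'I_n.+1} | (\sum_i (alpha i : nat) <= n)%N)
                (fun x => monomial alpha x *: c alpha x).
  by apply/funext => x; rewrite fE fct_sumE.
apply: subspace_sum (qpoly_subspace n) _ => alpha deg_alpha.
exact/(qpoly_leq deg_alpha)/qpoly_monomial_seq.
Qed.

End QuasiPolynomials.

Lemma finite_dim_qpoly (R : realType) (r : nat) (V : normedModType R)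
  (B : 'M[R]_r) (A : set ('rV[R]_r -> V)) :
  is_subspace_C A -> G_invariant (lattice_of B) A ->
  finite_dim (A `&` CG (lattice_of B)) ->
  forall n, finite_dim (A `&` qpoly (lattice_of B) n).
Proof.
move=> A_subC A_inv A_CG_fd; have [A_cont _ _ _] := A_subC.
have A_sub : is_subspace A by case: A_subC.
elim=> [|n [k [b A_qpoly_b]]].
  by apply: finite_dimS A_CG_fd => f [Af /qpoly0_CG].
apply: (@finite_dim_fdiff_seq _ _ _ _ [seq row j B | j <- enum 'I_r] _ b).
- exact: subspaceI A_sub (qpoly_subspace _ _ _).
- move=> _ f /mapP [j _ ->] [Af qf]; apply: A_qpoly_b; split.
    exact: subspaceB (A_inv _ _ Af (lattice_of_row B j)) Af.
  exact: qpoly_fdiff (lattice_of_row B j) qf.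
- apply: finite_dimS A_CG_fd => f [[Af _] f_per]; split=> //; split; first exact: A_cont.
  move=> g x /(periodic_lattice_of _); apply=> j.
  by apply: f_per; apply: map_f; rewrite mem_enum.
Qed.

Theorem theorem3p3 (R : realType) (r : nat) (V : normedModType R)
  (G : set 'rV[R]_r) (A : set ('rV[R]_r -> V)) :
  is_full_lattice G ->
  is_subspace_C A ->
  G_invariant G A ->
  finite_dim (A `&` CG G) ->
  forall n : nat, finite_dim (A `&` PnG G n).
Proof.
move=> [B [_ ->]] A_subC A_inv A_CG_fd n.
apply: finite_dimS (finite_dim_qpoly A_subC A_inv A_CG_fd n) => f [Af /PnG_sub_qpoly].
by split.
Qed.
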